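(* Let $\overline S(U)=\inf_{\theta\in\mathbb R^n}\{\Phi(\theta)+\sum_{j=1}^n\theta_jU_j\}$. Then $S(U)=\overline S(U)$ for every $U$ for which $S(U)$ is defined.
   Context: Let $A$ be a finite or countable set, $\mathcal M_1^+(A)$ the probability distributions on $A$, $I(p)=\sum_a h_a(p_a)$ a generalised entropy (each $h_a:[0,1]\to\mathbb R$ continuous, strictly concave, $h_a(0)=h_a(1)=0$), $H_1,\dots,H_n:A\to\mathbb R$ bounded below, $\langle p,X\rangle=\sum_ap_aX(a)$. $p^*$ satisfies the variational principle with parameters $\theta\in\mathbb R^n$ if $+\infty>I(p^* )-\sum_j\theta_j\langle p^*,H_j\rangle\ge I(p)-\sum_j\theta_j\langle p,H_j\rangle$ for all $p\in\mathcal M_1^+(A)$. Let $\mathcal D$ be the set of $\theta\in\mathbb R^n$ for which such $p^*$ exists (it is unique), denoted $p_\theta$. For $U\in\mathbb R^n$ of the form $U_j=\langle p_\eta,H_j\rangle$ ($j=1,\dots,n$) for some $\eta\in\mathcal D$, define the thermodynamic entropy $S(U)=I(p_\eta)$ (independent of the choice of $\eta$). The Massieu function is $\Phi(\theta)=\sup_U\{S(U)-\sum_j\theta_jU_j\}$ for $\theta\in\mathbb R^n$, the supremum over all $U$ for which $S(U)$ is defined. *)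

From Stdlib Require Import Reals Lra List ClassicalEpsilon.
Import ListNotations.
Open Scope R_scope.

Inductive Rbar : Type := Fin (r : R) | PInf | MInf.

Definition Rbar_le (x y : Rbar) : Prop :=
  match x, y with
  | MInf, _ => True
  | _, PInf => True
  | Fin a, Fin b => a <= b
  | _, _ => False
  end.

Definition Rbar_is_sup (E : Rbar -> Prop) (s : Rbar) : Prop :=
  (forall x, E x -> Rbar_le x s) /\
  (forall b, (forall x, E x -> Rbar_le x b) -> Rbar_le s b).

Definition Rbar_is_inf (E : Rbar -> Prop) (s : Rbar) : Prop :=
  (forall x, E x -> Rbar_le s x) /\
  (forall b, (forall x, E x -> Rbar_le b x) -> Rbar_le b s).

(** Supremum / infimum in the extended reals (they always exist; chosen by epsilon). *)
Definition Rbar_sup (E : Rbar -> Prop) : Rbar :=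
  epsilon (inhabits MInf) (Rbar_is_sup E).
Definition Rbar_inf (E : Rbar -> Prop) : Rbar :=
  epsilon (inhabits MInf) (Rbar_is_inf E).

(** c * x with the measure-theoretic convention 0 * (+-oo) = 0. *)
Definition Rbar_scal (c : R) (x : Rbar) : Rbar :=
  match x with
  | Fin r => Fin (c * r)
  | PInf => if Rlt_dec 0 c then PInf else if Rlt_dec c 0 then MInf else Fin 0
  | MInf => if Rlt_dec 0 c then MInf else if Rlt_dec c 0 then PInf else Fin 0
  end.

Definition Rbar_shift (x : Rbar) (c : R) : Rbar :=
  match x with Fin r => Fin (r + c) | PInf => PInf | MInf => MInf end.

(** Partial addition: None = undefined (+oo + -oo). *)
Definition Rbar_add_opt (x y : option Rbar) : option Rbar :=
  match x, y with
  | Some (Fin a), Some (Fin b) => Some (Fin (a + b))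
  | Some PInf, Some MInf => None
  | Some MInf, Some PInf => None
  | Some PInf, Some _ => Some PInf
  | Some _, Some PInf => Some PInf
  | Some MInf, Some _ => Some MInf
  | Some _, Some MInf => Some MInf
  | _, _ => None
  end.

(** Finite sum over indices j = 0..n-1 (vectors of R^n are modelled as nat -> R,
    only the first n coordinates are used). *)
Definition dot (n : nat) (x y : nat -> R) : R :=
  fold_right Rplus 0 (map (fun j => x j * y j) (seq 0 n)).

Section Thermo.
Variable A : Type.

(** Unordered sum of a family (meaningful for nonnegative families):
    supremum of all finite partial sums over duplicate-free lists. *)
Definition nnsum (f : A -> R) : Rbar :=
  Rbar_sup (fun x => exists l : list A, NoDup l /\
                       x = Fin (fold_right (fun a s => f a + s) 0 l)).

Definition is_dist (p : A -> R) : Prop :=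
  (forall a, 0 <= p a) /\ nnsum p = Fin 1.

(** <p, X> = sum_a p_a X(a), computed as (sum of positive parts) - (sum of negative
    parts); for X bounded below and p a distribution the negative part is finite. *)
Definition expect (p : A -> R) (X : A -> R) : Rbar :=
  match nnsum (fun a => Rmax (p a * X a) 0), nnsum (fun a => Rmax (- (p a * X a)) 0) with
  | Fin u, Fin v => Fin (u - v)
  | PInf, Fin _ => PInf
  | Fin _, PInf => MInf
  | _, _ => PInf (* unreachable under the standing assumptions *)
  end.

Variable h : A -> R -> R.
Variable n : nat.
Variable H : nat -> A -> R.

(** Generalised entropy I(p) = sum_a h_a(p_a) (h_a >= 0 on [0,1]). *)
Definition entropy (p : A -> R) : Rbar := nnsum (fun a => h a (p a)).

(** I(p) - sum_j theta_j <p, H_j>, in extended-real arithmetic; None if undefined. *)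
Definition vfun (theta : nat -> R) (p : A -> R) : option Rbar :=
  fold_left (fun acc j => Rbar_add_opt acc (Some (Rbar_scal (- theta j) (expect p (H j)))))
            (seq 0 n) (Some (entropy p)).

Definition VP (theta : nat -> R) (p : A -> R) : Prop :=
  is_dist p /\
  exists r : R, vfun theta p = Some (Fin r) /\
    forall q, is_dist q -> forall x, vfun theta q = Some x -> Rbar_le x (Fin r).

(** S(U) is defined and equals s. *)
Definition S_is (U : nat -> R) (s : R) : Prop :=
  exists (eta : nat -> R) (p : A -> R), VP eta p /\
    (forall j, (j < n)%nat -> expect p (H j) = Fin (U j)) /\
    entropy p = Fin s.

Definition Massieu (theta : nat -> R) : Rbar :=
  Rbar_sup (fun x => exists U s, S_is U s /\ x = Fin (s - dot n theta U)).

Definition Sbar (U : nat -> R) : Rbar :=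
  Rbar_inf (fun x => exists theta : nat -> R, x = Rbar_shift (Massieu theta) (dot n theta U)).

End Thermo.

(** The argument is a Legendre-duality sandwich:
    - for every [theta], [Phi(theta) >= S(U) - theta.U] simply because [U] is
      one of the points over which [Phi(theta)] is a supremum (Fenchel-Young);
    - at [theta = eta] the supremum is attained at [U]: any other [U'] with
      [S(U') = I(p')] satisfies [I(p') - eta.U' <= I(p_eta) - eta.U] by the
      variational principle for [p_eta] tested against the distribution [p'].
    Hence the infimum of [Phi(theta) + theta.U] is attained at [eta] with
    value [S(U)]. *)

From Stdlib Require Import Reals Lra Lia List Classical ClassicalEpsilon.
Open Scope R_scope.

(** Every set of extended reals has a least upper bound (completeness of R,
    plus the cases where the set is empty, unbounded or contains [+oo]). *)
Lemma Rbar_sup_exists (E : Rbar -> Prop) : exists s, Rbar_is_sup E s.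
Proof.
  destruct (classic (E PInf)) as [HPInf | HnoPInf].
  { exists PInf; split.
    - intros [r| |] _; simpl; auto.
    - intros b Hb; specialize (Hb _ HPInf); destruct b; simpl in *; auto. }
  destruct (classic (exists r, E (Fin r))) as [[r0 Hr0] | Hnofin].
  2:{ exists MInf; split; [| intros b _; simpl; auto].
      intros [r| |] Hx; simpl; auto.
      apply Hnofin; eauto. }
  destruct (classic (bound (fun r => E (Fin r)))) as [Hbounded | Hunbounded].
  - destruct (completeness _ Hbounded (ex_intro _ r0 Hr0)) as [l [Hl_ub Hl_least]].
    exists (Fin l); split.
    + intros [r| |] Hx; simpl; auto.
    + intros [c| |] Hub; simpl; auto.
      * apply Hl_least; intros r Hr; exact (Hub _ Hr).
      * exact (Hub _ Hr0).
  - exists PInf; split.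
    + intros [r| |] _; simpl; auto.
    + intros [c| |] Hub; simpl; auto.
      * apply Hunbounded; exists c; intros r Hr; exact (Hub _ Hr).
      * exact (Hub _ Hr0).
Qed.

Lemma Rbar_sup_upper (E : Rbar -> Prop) (x : Rbar) : E x -> Rbar_le x (Rbar_sup E).
Proof.
  intros Ex.
  destruct (epsilon_spec (inhabits MInf) _ (Rbar_sup_exists E)) as [Hub _].
  exact (Hub x Ex).
Qed.

Lemma Rbar_le_antisym_fin (t : Rbar) (s : R) :
  Rbar_le t (Fin s) -> Rbar_le (Fin s) t -> t = Fin s.
Proof.
  destruct t; simpl; intros H1 H2; try contradiction.
  f_equal; lra.
Qed.

Lemma Rbar_sup_max (E : Rbar -> Prop) (s : R) :
  E (Fin s) -> (forall x, E x -> Rbar_le x (Fin s)) -> Rbar_sup E = Fin s.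
Proof.
  intros Es Hub.
  destruct (epsilon_spec (inhabits MInf) (Rbar_is_sup E)) as [Hupper Hleast].
  { exists (Fin s); split; [exact Hub |].
    intros b Hb; exact (Hb _ Es). }
  apply Rbar_le_antisym_fin; [apply Hleast | apply Hupper]; assumption.
Qed.

Lemma Rbar_inf_min (E : Rbar -> Prop) (s : R) :
  E (Fin s) -> (forall x, E x -> Rbar_le (Fin s) x) -> Rbar_inf E = Fin s.
Proof.
  intros Es Hlb.
  destruct (epsilon_spec (inhabits MInf) (Rbar_is_inf E)) as [Hlower Hgreatest].
  { exists (Fin s); split; [exact Hlb |].
    intros b Hb; exact (Hb _ Es). }
  apply Rbar_le_antisym_fin; [apply Hlower | apply Hgreatest]; assumption.
Qed.

Lemma Rbar_shift_ge (a c : R) (x : Rbar) :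
  Rbar_le (Fin a) x -> Rbar_le (Fin (a + c)) (Rbar_shift x c).
Proof. destruct x; simpl; auto; lra. Qed.

Lemma fold_vfun_fin (A : Type) (n : nat) (H : nat -> A -> R) (theta U : nat -> R)
  (q : A -> R) :
  (forall j, (j < n)%nat -> expect A q (H j) = Fin (U j)) ->
  forall l c, (forall j, In j l -> (j < n)%nat) ->
  fold_left (fun acc j => Rbar_add_opt acc (Some (Rbar_scal (- theta j) (expect A q (H j)))))
    l (Some (Fin c)) =
  Some (Fin (c - fold_right Rplus 0 (map (fun j => theta j * U j) l))).
Proof.
  intros HU l; induction l as [|j l IH]; intros c Hl; simpl.
  - f_equal; f_equal; lra.
  - rewrite HU by (apply Hl; simpl; auto); simpl.
    rewrite IH by (intros k Hk; apply Hl; simpl; auto).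
    f_equal; f_equal; lra.
Qed.

Lemma vfun_fin (A : Type) (h : A -> R -> R) (n : nat) (H : nat -> A -> R)
  (theta U : nat -> R) (q : A -> R) (s : R) :
  (forall j, (j < n)%nat -> expect A q (H j) = Fin (U j)) ->
  entropy A h q = Fin s ->
  vfun A h n H theta q = Some (Fin (s - dot n theta U)).
Proof.
  intros HU Hent; unfold vfun, dot; rewrite Hent.
  apply (fold_vfun_fin A n H); [exact HU |].
  intros j Hj; apply in_seq in Hj; lia.
Qed.

Section Duality.
Variables (A : Type) (h : A -> R -> R) (n : nat) (H : nat -> A -> R).

Lemma Massieu_ge (theta U : nat -> R) (s : R) :
  S_is A h n H U s -> Rbar_le (Fin (s - dot n theta U)) (Massieu A h n H theta).
Proof.
  intros HS; apply Rbar_sup_upper; exists U, s; split; auto.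
Qed.

(** At the parameters [eta] realising [U], the Massieu supremum is attained
    at [U], by the variational principle for [p_eta]. *)
Lemma Massieu_at_eta (eta U : nat -> R) (p : A -> R) (s : R) :
  VP A h n H eta p ->
  (forall j, (j < n)%nat -> expect A p (H j) = Fin (U j)) ->
  entropy A h p = Fin s ->
  Massieu A h n H eta = Fin (s - dot n eta U).
Proof.
  intros HVP HU Hent.
  pose proof HVP as [_ [r [Hr Hmax]]].
  rewrite (vfun_fin A h n H eta U p s HU Hent) in Hr.
  injection Hr as Hr; subst r.
  apply Rbar_sup_max.
  - exists U, s; split; [exists eta, p; auto | reflexivity].
  - intros x [U' [s' [[eta' [p' [[Hdist' _] [HU' Hent']]]] ->]]].
    apply (Hmax p' Hdist'); apply vfun_fin; auto.
Qed.

End Duality.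

Theorem mainTheorem6
  (A : Type)
  (hcount : exists f : A -> nat, forall a b, f a = f b -> a = b)
  (h : A -> R -> R)
  (h_cont : forall a x, 0 <= x <= 1 ->
      limit1_in (h a) (fun y => 0 <= y <= 1) (h a x) x)
  (h_sconc : forall a x y t, 0 <= x <= 1 -> 0 <= y <= 1 -> x <> y -> 0 < t < 1 ->
      t * h a x + (1 - t) * h a y < h a (t * x + (1 - t) * y))
  (h_0 : forall a, h a 0 = 0)
  (h_1 : forall a, h a 1 = 0)
  (n : nat) (H : nat -> A -> R)
  (H_bdd : forall j, (j < n)%nat -> exists m : R, forall a, m <= H j a)
  (U : nat -> R) (s : R) :
  S_is A h n H U s -> Sbar A h n H U = Fin s.
Proof.
  intros HS.
  pose proof HS as [eta [p [HVP [HU Hent]]]].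
  apply Rbar_inf_min.
  -
    exists eta; rewrite (Massieu_at_eta A h n H eta U p s HVP HU Hent); simpl.
    f_equal; ring.
  -
    intros x [theta ->].
    replace s with ((s - dot n theta U) + dot n theta U) at 1 by ring.
    apply Rbar_shift_ge, Massieu_ge; assumption.
Qed.
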